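(* Let $f:\mathbb{R}^n\to\mathbb{R}$ and $c:\mathbb{R}^n\to\mathbb{R}^m$ ($m<n$) be smooth, with $g=\nabla f$ and Jacobian $J=\nabla c$. Suppose noisy evaluations satisfy, for all $x$, $|\tilde f(x)-f(x)|\le\epsilon_f$, $\|\tilde c(x)-c(x)\|_1\le\epsilon_c$, $\|\tilde g(x)-g(x)\|\le\epsilon_g$, $\|\tilde J(x)-J(x)\|_{1,2}\le\epsilon_J$. Let $\{x_k\}$ be a sequence with $\sigma_{\min}(J_k)\ge\gamma>\epsilon_J$ for all $k$; set $\delta=1/(\gamma-\epsilon_J)$, $\eta=1/\gamma$. For $\beta_k>0$ let $d_k$ solve $\min_d\tfrac12\beta_k\|d\|^2+\tilde g_k^Td$ s.t. $\tilde c_k+\tilde J_kd=0$; fix $\tau\in(0,1)$ and suppose $\pi_k\ge\frac{1}{1-\tau}\|(\tilde J_k\tilde J_k^T)^{-1}\tilde J_k\tilde g_k\|_\infty$ for every $k$. Define, for $x\in\mathbb{R}^n$, $\beta>0$, $\pi>0$, $$E(x,\beta,\pi)=\frac{1}{\beta}\big(\|g(x)\|^2\eta\epsilon_J+\epsilon_g\|g(x)\|\big)+\epsilon_g\delta(\|c(x)\|_1+\epsilon_c)+\pi\Big[(2-\tau)\epsilon_c+\epsilon_J\Big(\delta(\|c(x)\|_1+\epsilon_c)+\frac{1}{\beta}\big(\|P(x)g(x)\|+\|g(x)\|\eta\epsilon_J+\epsilon_g\big)\Big)\Big].$$ Choose any $\theta_1\in[0,1)$. For any $x_k$ such that $$(1-\theta_1)\Big(\frac{1}{\beta_k}g_k^TP_kg_k+\tau\pi_k\|c_k\|_1\Big)\ge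 E(x_k,\beta_k,\pi_k),$$ we have $$\ell(x_k;d_k)\le-\theta_1\Big(\frac{1}{\beta_k}g_k^TP_kg_k+\tau\pi_k\|c_k\|_1\Big),$$ where $\ell(x_k;d_k)=g_k^Td_k+\pi_k\|c_k+J_kd_k\|_1-\pi_k\|c_k\|_1$.
   Context: $\|\cdot\|$ is the Euclidean norm; $\|A\|_{1,2}=\sup_{x\ne0}\|Ax\|_1/\|x\|$; $\sigma_{\min}$ is the smallest singular value. Subscript $k$ denotes evaluation at $x_k$. $P(x)=I-J(x)^T(J(x)J(x)^T)^{-1}J(x)$ and $P_k=P(x_k)$. *)

From HB Require Import structures.
From mathcomp Require Import all_boot all_order all_algebra.
From mathcomp Require Import all_classical all_reals all_analysis.

Set Implicit Arguments.
Unset Strict Implicit.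
Unset Printing Implicit Defensive.

Import Order.TTheory GRing.Theory Num.Theory.
Local Open Scope ring_scope.
Local Open Scope classical_set_scope.

Section Defs.
Variable R : realType.

Definition norm2 {n : nat} (v : 'cV[R]_n) : R := Num.sqrt (\sum_i (v i 0) ^+ 2).
Definition norm1 {n : nat} (v : 'cV[R]_n) : R := \sum_i `|v i 0|.
Definition normInf {n : nat} (v : 'cV[R]_n) : R := \big[Num.max/0]_i `|v i 0|.
Definition dotv {n : nat} (u v : 'cV[R]_n) : R := (u^T *m v) 0 0.

Definition opnorm12 {m n : nat} (A : 'M[R]_(m, n)) : R :=
  sup [set norm1 (A *m x) / norm2 x | x in [set x : 'cV[R]_n | x != 0]].

(* smallest singular value of an m x n matrix A with m <= n (full-row-rank
   setting): sigma_min(A) = min_{||y|| = 1} ||A^T y|| *)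
Definition sigma_min {m n : nat} (A : 'M[R]_(m, n)) : R :=
  inf [set norm2 (A^T *m y) | y in [set y : 'cV[R]_m | norm2 y = 1]].

Definition projP {m n : nat} (J : 'M[R]_(m, n)) : 'M[R]_n :=
  1%:M - J^T *m invmx (J *m J^T) *m J.

Definition Eterm {m n : nat} (eps_c eps_g eps_J delta eta tau : R)
  (gx : 'cV[R]_n) (cx : 'cV[R]_m) (Jx : 'M[R]_(m, n)) (beta pi : R) : R :=
  beta^-1 * (norm2 gx ^+ 2 * eta * eps_J + eps_g * norm2 gx)
  + eps_g * delta * (norm1 cx + eps_c)
  + pi * ((2 - tau) * eps_c
          + eps_J * (delta * (norm1 cx + eps_c)
                     + beta^-1 * (norm2 (projP Jx *m gx) + norm2 gx * eta * eps_J + eps_g))).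

Definition ell {m n : nat} (gx : 'cV[R]_n) (cx : 'cV[R]_m) (Jx : 'M[R]_(m, n))
  (pi : R) (d : 'cV[R]_n) : R :=
  dotv gx d + pi * norm1 (cx + Jx *m d) - pi * norm1 cx.

Definition qp_obj {n : nat} (beta : R) (gt d : 'cV[R]_n) : R :=
  2^-1 * beta * norm2 d ^+ 2 + dotv gt d.

Definition solves_qp {m n : nat} (beta : R) (gt : 'cV[R]_n) (ct : 'cV[R]_m)
  (Jt : 'M[R]_(m, n)) (d : 'cV[R]_n) : Prop :=
  ct + Jt *m d = 0 /\
  forall d' : 'cV[R]_n, ct + Jt *m d' = 0 -> qp_obj beta gt d <= qp_obj beta gt d'.

End Defs.

(* The step is [d = - beta^-1 Pt gt - Jt^T (Jt Jt^T)^-1 ct], so [ell(x; d)] splits into a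
   tangential part [- beta^-1 g^T Pt gt], a normal part [- g^T Jt^T (Jt Jt^T)^-1 ct] and
   the change [pi (|c + J d|_1 - |c|_1)] of the penalty.  The tangential part is compared
   with [- beta^-1 g^T P g] through the projector perturbation bound
   [|(P - Pt) g| <= (eps_J / gamma) |g|]; the normal part pairs the multiplier estimate
   with [ct], which the lower bound on [pi] controls by Hoelder's inequality; and
   [|c + J d|_1 <= eps_c + eps_J |d|] because [ct + Jt d = 0].  Collecting the error terms
   gives [ell <= - Psi + E], and the hypothesis [E <= (1 - theta1) Psi] concludes. *)

From HB Require Import structures.
From mathcomp Require Import all_boot all_order all_algebra.
From mathcomp Require Import all_classical all_reals all_analysis.
From mathcomp Require Import ring lra.
Import Order.TTheory GRing.Theory Num.Theory.
Import numFieldNormedType.Exports.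
Local Open Scope classical_set_scope.
Local Open Scope ring_scope.
Set Implicit Arguments.
Unset Strict Implicit.

Section Norms.
Variable R : realType.
Implicit Types (a b : R).

Lemma le_of_sqr_le a b : 0 <= b -> a ^+ 2 <= b ^+ 2 -> a <= b.
Proof. by move=> b_ge0 ab; nra. Qed.

Lemma le_of_sqr_le_mul a b : 0 <= a -> 0 <= b -> a ^+ 2 <= a * b -> a <= b.
Proof. by move=> a_ge0 b_ge0 ab; nra. Qed.

Variable n : nat.
Implicit Types (u v w : 'cV[R]_n).

Lemma dotvE u v : dotv u v = \sum_i u i 0 * v i 0.
Proof. by rewrite /dotv mxE; apply: eq_bigr => i _; rewrite mxE. Qed.

Lemma dotvC u v : dotv u v = dotv v u.
Proof. by rewrite !dotvE; apply: eq_bigr => i _; rewrite mulrC. Qed.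

Lemma dotvDr u v w : dotv u (v + w) = dotv u v + dotv u w.
Proof. by rewrite /dotv mulmxDr mxE. Qed.

Lemma dotvDl u v w : dotv (v + w) u = dotv v u + dotv w u.
Proof. by rewrite dotvC dotvDr !(dotvC u). Qed.

Lemma dotvZr a u v : dotv u (a *: v) = a * dotv u v.
Proof. by rewrite /dotv -scalemxAr mxE. Qed.

Lemma dotvZl a u v : dotv (a *: u) v = a * dotv u v.
Proof. by rewrite dotvC dotvZr dotvC. Qed.

Lemma dotvNr u v : dotv u (- v) = - dotv u v.
Proof. by rewrite -scaleN1r dotvZr mulN1r. Qed.

Lemma dotvNl u v : dotv (- u) v = - dotv u v.
Proof. by rewrite dotvC dotvNr dotvC. Qed.

Lemma dotvBr u v w : dotv u (v - w) = dotv u v - dotv u w.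
Proof. by rewrite dotvDr dotvNr. Qed.

Lemma dotvBl u v w : dotv (v - w) u = dotv v u - dotv w u.
Proof. by rewrite dotvDl dotvNl. Qed.

Lemma dotv0r u : dotv u 0 = 0.
Proof. by rewrite /dotv mulmx0 mxE. Qed.

Lemma dotv_trmx m (A : 'M[R]_(m, n)) (y : 'cV[R]_m) v :
  dotv y (A *m v) = dotv (A^T *m y) v.
Proof. by rewrite /dotv trmx_mul trmxK mulmxA. Qed.

Lemma dotvv_ge0 v : 0 <= dotv v v.
Proof. by rewrite dotvE; apply: sumr_ge0 => i _; rewrite -expr2 sqr_ge0. Qed.

Lemma dotvv_eq0 v : dotv v v = 0 -> v = 0.
Proof.
rewrite dotvE => /eqP; rewrite psumr_eq0 => [/allP v0|i _]; last by rewrite -expr2 sqr_ge0.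
apply/matrixP => i j; rewrite ord1 mxE.
by have := v0 i (mem_index_enum _); rewrite /= -expr2 sqrf_eq0 => /eqP.
Qed.

Lemma norm2_ge0 v : 0 <= norm2 v.
Proof. exact: sqrtr_ge0. Qed.

Lemma norm2_sqr v : norm2 v ^+ 2 = dotv v v.
Proof.
rewrite /norm2 sqr_sqrtr; last by have := dotvv_ge0 v; rewrite dotvE.
by rewrite dotvE; apply: eq_bigr => i _; rewrite expr2.
Qed.

Lemma norm2_eq0 v : norm2 v = 0 -> v = 0.
Proof. by move=> v0; apply: dotvv_eq0; rewrite -norm2_sqr v0 expr2 mulr0. Qed.

Lemma norm2_gt0 v : v != 0 -> 0 < norm2 v.
Proof. by move=> /eqP v_neq0; rewrite lt_def norm2_ge0 andbT; apply/eqP => /norm2_eq0. Qed.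

Lemma norm2_0 : norm2 (0 : 'cV[R]_n) = 0.
Proof. by rewrite /norm2 big1 ?sqrtr0 // => i _; rewrite mxE expr0n. Qed.

Lemma norm2N v : norm2 (- v) = norm2 v.
Proof. by rewrite /norm2; congr Num.sqrt; apply: eq_bigr => i _; rewrite mxE sqrrN. Qed.

Lemma cauchy_schwarz u v : dotv u v <= norm2 u * norm2 v.
Proof.
have [->|v_neq0] := eqVneq v 0; first by rewrite dotv0r norm2_0 mulr0.
have vv_gt0 : 0 < dotv v v by rewrite -norm2_sqr exprn_gt0 ?norm2_gt0.
have [uv_le0|uv_gt0] := lerP (dotv u v) 0.
  by apply: le_trans uv_le0 _; apply: mulr_ge0; apply: norm2_ge0.
apply: le_of_sqr_le; first by apply: mulr_ge0; apply: norm2_ge0.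
rewrite exprMn !norm2_sqr.
(* expand [|u - t v|^2 >= 0] at the minimiser [t = <u, v> / |v|^2] *)
have := dotvv_ge0 (u - (dotv u v / dotv v v) *: v).
rewrite !dotvBl !dotvBr !dotvZl !dotvZr (dotvC v u).
set t := dotv u v / dotv v v.
have -> : dotv u u - t * dotv u v - (t * dotv u v - t * (t * dotv v v))
         = dotv u u - dotv u v ^+ 2 / dotv v v by rewrite /t; field; exact: lt0r_neq0.
by rewrite subr_ge0 ler_pdivrMr.
Qed.

Lemma cauchy_schwarz_abs u v : `|dotv u v| <= norm2 u * norm2 v.
Proof.
rewrite ler_norml cauchy_schwarz andbT lerNl -dotvNl -(norm2N u).
exact: cauchy_schwarz.
Qed.

Lemma norm2D u v : norm2 (u + v) <= norm2 u + norm2 v.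
Proof.
apply: le_of_sqr_le; first by apply: addr_ge0; apply: norm2_ge0.
rewrite norm2_sqr dotvDl !dotvDr (dotvC v u) sqrrD !norm2_sqr.
by have := cauchy_schwarz u v; lra.
Qed.

Lemma norm2B u v : norm2 (u - v) <= norm2 u + norm2 v.
Proof. by rewrite -(norm2N v); apply: norm2D. Qed.

Lemma norm2Z a v : norm2 (a *: v) = `|a| * norm2 v.
Proof.
apply/eqP; rewrite -(eqrXn2 (n := 2)) ?mulr_ge0 ?norm2_ge0 //.
by rewrite exprMn !norm2_sqr dotvZl dotvZr real_normK ?num_real // mulrA expr2.
Qed.

Lemma pythagoras u v : dotv u v = 0 ->
  norm2 (u - v) ^+ 2 = norm2 u ^+ 2 + norm2 v ^+ 2.
Proof. by move=> uv0; rewrite !norm2_sqr dotvBl !dotvBr uv0 (dotvC v u) uv0; lra. Qed.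

Lemma abs_coord_le_norm2 v i : `|v i 0| <= norm2 v.
Proof.
apply: le_of_sqr_le; first exact: norm2_ge0.
rewrite norm2_sqr dotvE real_normK ?num_real // (bigD1 i) //= -expr2 lerDl.
by apply: sumr_ge0 => j _; rewrite -expr2 sqr_ge0.
Qed.

Lemma norm1_ge0 v : 0 <= norm1 v.
Proof. exact: sumr_ge0. Qed.

Lemma norm1D u v : norm1 (u + v) <= norm1 u + norm1 v.
Proof. by rewrite /norm1 -big_split; apply: ler_sum => i _; rewrite mxE ler_normD. Qed.

Lemma norm1N v : norm1 (- v) = norm1 v.
Proof. by apply: eq_bigr => i _; rewrite mxE normrN. Qed.

Lemma norm2_le_norm1 v : norm2 v <= norm1 v.
Proof.
apply: le_of_sqr_le; first exact: norm1_ge0.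
rewrite norm2_sqr dotvE /norm1.
suff [] : \sum_i v i 0 * v i 0 <= (\sum_i `|v i 0|) ^+ 2 /\ 0 <= \sum_i `|v i 0| by [].
elim/big_ind2: _ => // [? ? ? ? [? ?] [? ?]|i _]; first by split; nra.
by rewrite real_normK ?num_real // expr2.
Qed.

Lemma abs_dotv_le_normInf_norm1 u v : `|dotv u v| <= normInf u * norm1 v.
Proof.
rewrite dotvE /norm1 mulr_sumr; apply: le_trans (ler_norm_sum _ _ _) _.
apply: ler_sum => i _; rewrite normrM ler_wpM2r //.
exact: (le_bigmax (0 : R) (fun i => `|u i 0|) i).
Qed.

End Norms.

Section OperatorBounds.
Variables (R : realType) (m n : nat).
Implicit Types (A : 'M[R]_(m, n)).

Lemma norm1_mulmx_le_opnorm12 A (z : 'cV[R]_n) :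
  norm1 (A *m z) <= opnorm12 A * norm2 z.
Proof.
have [->|z_neq0] := eqVneq z 0.
  by rewrite mulmx0 norm2_0 mulr0 /norm1 big1 // => i _; rewrite mxE normr0.
have crude y : norm1 (A *m y) <= (\sum_i \sum_j `|A i j|) * norm2 y.
  rewrite /norm1 mulr_suml; apply: ler_sum => i _.
  rewrite mxE mulr_suml; apply: le_trans (ler_norm_sum _ _ _) _.
  by apply: ler_sum => j _; rewrite normrM ler_wpM2l ?abs_coord_le_norm2.
have ub : has_ubound [set norm1 (A *m y) / norm2 y | y in [set y | y != 0]].
  by exists (\sum_i \sum_j `|A i j|) => _ [y /= /norm2_gt0 y_gt0 <-]; rewrite ler_pdivrMr.
have := ub_le_sup ub (ex_intro2 _ _ z z_neq0 erefl).
by rewrite ler_pdivrMr ?norm2_gt0.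
Qed.

Lemma opnorm12_ge0 A : (0 < n)%N -> 0 <= opnorm12 A.
Proof.
move=> n_gt0; pose z : 'cV[R]_n := const_mx 1.
have z_neq0 : z != 0.
  by apply/eqP => /matrixP /(_ (Ordinal n_gt0) 0) /eqP; rewrite !mxE oner_eq0.
have := le_trans (norm1_ge0 _) (norm1_mulmx_le_opnorm12 A z).
by rewrite pmulr_lge0 ?norm2_gt0.
Qed.

Lemma sigma_min_mul_norm2_le A (y : 'cV[R]_m) :
  sigma_min A * norm2 y <= norm2 (A^T *m y).
Proof.
have [->|/norm2_gt0 y_gt0] := eqVneq y 0; first by rewrite norm2_0 mulr0 norm2_ge0.
have lb : has_lbound [set norm2 (A^T *m z) | z in [set z | norm2 z = 1]].
  by exists 0 => _ [z _ <-]; exact: norm2_ge0.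
have y1 : norm2 ((norm2 y)^-1 *: y) = 1.
  by rewrite norm2Z ger0_norm ?invr_ge0 ?norm2_ge0 // mulVf // gt_eqF.
have := ge_inf lb (ex_intro2 _ _ _ y1 erefl).
by rewrite -scalemxAr norm2Z ger0_norm ?invr_ge0 ?norm2_ge0 // -ler_pdivlMr // mulrC.
Qed.

Lemma norm2_trmx_mul_le A (e : R) : 0 <= e ->
  (forall z, norm1 (A *m z) <= e * norm2 z) ->
  forall y, norm2 (A^T *m y) <= e * norm2 y.
Proof.
move=> e_ge0 Ale y; apply: le_of_sqr_le_mul; rewrite ?mulr_ge0 ?norm2_ge0 //.
rewrite norm2_sqr -dotv_trmx; apply: le_trans (cauchy_schwarz _ _) _.
rewrite mulrCA mulrA [X in X <= _]mulrC ler_wpM2r ?norm2_ge0 //.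
exact: le_trans (norm2_le_norm1 _) (Ale _).
Qed.

End OperatorBounds.

Section Projection.
Variables (R : realType) (m n : nat) (A : 'M[R]_(m, n)).
Hypothesis A_gram : A *m A^T \in unitmx.
Local Notation P := (projP A).
Implicit Types (u v z : 'cV[R]_n).

Lemma projP_tr : P^T = P.
Proof. by rewrite /projP linearB /= trmx1 !trmx_mul trmxK trmx_inv trmx_mul trmxK mulmxA. Qed.

Lemma mulmx_projP : A *m P = 0.
Proof. by rewrite /projP mulmxBr mulmx1 !mulmxA mulmxV // mul1mx subrr. Qed.

Lemma projP_mulmx_tr : P *m A^T = 0.
Proof. by rewrite /projP mulmxBl mul1mx -!mulmxA mulVmx // mulmx1 subrr. Qed.

Lemma projP_idem : P *m P = P.
Proof. by rewrite {2}/projP mulmxBr mulmx1 !mulmxA projP_mulmx_tr !mul0mx subr0. Qed.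

Lemma projP_tr_mul (y : 'cV[R]_m) : P *m (A^T *m y) = 0.
Proof. by rewrite mulmxA projP_mulmx_tr mul0mx. Qed.

Lemma subr_projP z : z - P *m z = A^T *m (invmx (A *m A^T) *m (A *m z)).
Proof. by rewrite /projP mulmxBl mul1mx opprB addrC subrK !mulmxA. Qed.

Lemma projP_id z : A *m z = 0 -> P *m z = z.
Proof. by move=> Az0; apply/eqP; rewrite -subr_eq0 -opprB oppr_eq0 subr_projP Az0 !mulmx0. Qed.

Lemma dotv_projP u v : dotv (P *m u) v = dotv u (P *m v).
Proof. by rewrite dotv_trmx projP_tr. Qed.

Lemma dotv_projP_subr u v : dotv (P *m u) (v - P *m v) = 0.
Proof. by rewrite dotv_projP mulmxBr mulmxA projP_idem subrr dotv0r. Qed.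

Lemma norm2_projP_pythagoras z :
  norm2 z ^+ 2 = norm2 (P *m z) ^+ 2 + norm2 (z - P *m z) ^+ 2.
Proof.
have orth := dotv_projP_subr z z; rewrite !norm2_sqr.
set p := P *m z in orth *; set w := z - p in orth *.
have -> : z = p + w by rewrite /w addrC subrK.
clearbody p w.
by rewrite dotvDl !dotvDr (dotvC w p) orth addr0 add0r.
Qed.

Lemma norm2_projP_le z : norm2 (P *m z) <= norm2 z.
Proof.
apply: le_of_sqr_le; first exact: norm2_ge0.
by rewrite (norm2_projP_pythagoras z) lerDl sqr_ge0.
Qed.

End Projection.

Section GramMatrices.
Variables (R : realType) (m n : nat).

Lemma ker0_unitmx (M : 'M[R]_m) : (forall w : 'cV[R]_m, M *m w = 0 -> w = 0) -> M \in unitmx.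
Proof.
move=> Mker0; rewrite unitmxE unitfE -det_tr; apply/negP => /det0P [v v_neq0 vM0].
have /Mker0 /(congr1 trmx) : M *m v^T = 0 by rewrite -[M]trmxK -trmx_mul vM0 trmx0.
by rewrite trmxK trmx0 => v0; rewrite v0 eqxx in v_neq0.
Qed.

Lemma lower_bound_trmx_mul_eq0 (B : 'M[R]_(m, n)) (a : R) (y : 'cV[R]_m) : 0 < a ->
  (forall y, a * norm2 y <= norm2 (B^T *m y)) -> B^T *m y = 0 -> y = 0.
Proof.
move=> a_gt0 Ble BTy0; have := Ble y; rewrite BTy0 norm2_0 pmulr_rle0 // => y_le0.
by apply: norm2_eq0; apply/eqP; rewrite eq_le y_le0 norm2_ge0.
Qed.

Lemma unitmx_gram (B : 'M[R]_(m, n)) (a : R) : 0 < a ->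
  (forall y, a * norm2 y <= norm2 (B^T *m y)) -> B *m B^T \in unitmx.
Proof.
move=> a_gt0 Ble; apply: ker0_unitmx => w BBw0.
apply: (lower_bound_trmx_mul_eq0 a_gt0 Ble); apply: norm2_eq0; apply/eqP.
by rewrite -sqrf_eq0 norm2_sqr -dotv_trmx mulmxA BBw0 dotv0r.
Qed.

End GramMatrices.

Section QuadraticSubproblem.
Variables (R : realType) (m n : nat).

Lemma qp_objD (beta : R) (gt s w : 'cV[R]_n) : dotv (beta *: s + gt) w = 0 ->
  qp_obj beta gt (s + w) = qp_obj beta gt s + 2^-1 * beta * norm2 w ^+ 2.
Proof.
rewrite dotvDl dotvZl => sw0.
by rewrite /qp_obj !norm2_sqr !dotvDl !dotvDr (dotvC w s); lra.
Qed.

Lemma solves_qpE (beta : R) (gt : 'cV[R]_n) (ct : 'cV[R]_m) (Jt : 'M[R]_(m, n)) d :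
  0 < beta -> Jt *m Jt^T \in unitmx -> solves_qp beta gt ct Jt d ->
  d = - (beta^-1 *: (projP Jt *m gt)) - Jt^T *m (invmx (Jt *m Jt^T) *m ct).
Proof.
move=> beta_gt0 Jt_gram [d_feas d_opt].
set s := _ - _.
have Jt_s : Jt *m s = - ct.
  rewrite mulmxBr mulmxN -scalemxAr mulmxA mulmx_projP // mul0mx scaler0 oppr0.
  by rewrite !mulmxA mulmxV // mul1mx sub0r.
have Jt_ds : Jt *m (d - s) = 0.
  by rewrite mulmxBr Jt_s opprK addrC d_feas.
have orth : dotv (beta *: s + gt) (d - s) = 0.
  have -> : beta *: s + gt = gt - projP Jt *m gt - beta *: (Jt^T *m (invmx (Jt *m Jt^T) *m ct)).
    by rewrite /s scalerBr scalerN scalerA mulfV ?gt_eqF // scale1r addrC addrA.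
  by rewrite subr_projP // dotvBl dotvZl -!dotv_trmx Jt_ds !dotv0r mulr0 subrr.
have := d_opt s; rewrite Jt_s subrr => /(_ erefl).
have half_beta_gt0 : 0 < 2^-1 * beta by rewrite mulr_gt0 ?invr_gt0.
rewrite -{1}(subrK s d) addrC qp_objD // gerDl pmulr_rle0 // => w_le0.
apply/eqP; rewrite -subr_eq0; apply/eqP/norm2_eq0/eqP.
by rewrite -sqrf_eq0 eq_le w_le0 sqr_ge0.
Qed.

End QuadraticSubproblem.

Section ProjectionPerturbation.
Variables (R : realType) (m n : nat) (J Jt : 'M[R]_(m, n)) (gam eJ : R).
Hypothesis J_lower : forall y, gam * norm2 y <= norm2 (J^T *m y).
Hypothesis dJ_le : forall z, norm1 ((Jt - J) *m z) <= eJ * norm2 z.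
Hypothesis eJ_ge0 : 0 <= eJ.
Hypothesis eJ_lt_gam : eJ < gam.

(* In the application [X = |x|], [Y = |y|] for a lift [y] of [x] to [ker Jt],
   [p = |Pt x|], [q = |x - Pt x|] and [r = |y - P y|]. *)
Lemma dual_projection_ineq (e X Y p q r : R) :
  0 <= e < 1 -> 0 <= X -> 0 <= Y -> 0 <= p -> 0 <= q -> 0 <= r ->
  Y ^+ 2 = X ^+ 2 + r ^+ 2 -> r <= e * Y ->
  X ^+ 2 = p ^+ 2 + q ^+ 2 -> X ^+ 2 <= p * Y -> q <= e * X.
Proof.
move=> /andP [e_ge0 e_lt1] X0 Y0 p0 q0 r0 YXr rY Xpq XpY.
have Y_le : Y ^+ 2 * (1 - e ^+ 2) <= X ^+ 2 by nra.
have X4_le : X ^+ 2 * X ^+ 2 <= p ^+ 2 * Y ^+ 2 by nra.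
apply: le_of_sqr_le; first exact: mulr_ge0.
have [X_eq0|X_gt0] := eqVneq X 0; first by rewrite X_eq0 in Xpq *; nra.
have : X ^+ 2 * (1 - e ^+ 2) <= p ^+ 2.
  have X2_gt0 : 0 < X ^+ 2 by rewrite exprn_gt0 // lt_def X_gt0.
  rewrite -(ler_pM2r X2_gt0) mulrAC.
  apply: le_trans (_ : p ^+ 2 * Y ^+ 2 * (1 - e ^+ 2) <= _).
    by apply: ler_wpM2r => //; rewrite subr_ge0 expr_le1 // ltW.
  by rewrite -mulrA; apply: ler_wpM2l; rewrite ?sqr_ge0.
by nra.
Qed.

Local Notation P := (projP J).
Local Notation Pt := (projP Jt).
Local Notation e := (gam^-1 * eJ).

Let gam_gt0 : 0 < gam. Proof. exact: le_lt_trans eJ_lt_gam. Qed.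
Let e_ge0 : 0 <= e. Proof. by rewrite mulr_ge0 // invr_ge0 ltW. Qed.
Let e_lt1 : e < 1. Proof. by rewrite mulrC ltr_pdivrMr // mul1r. Qed.
Let dJ_tr_le := norm2_trmx_mul_le eJ_ge0 dJ_le.

Lemma norm2_trmx_perturbed_ge y : (gam - eJ) * norm2 y <= norm2 (Jt^T *m y).
Proof.
have JtE : J^T *m y = Jt^T *m y - (Jt - J)^T *m y.
  by rewrite linearB /= mulmxBl opprB addrC subrK.
have := norm2B (Jt^T *m y) ((Jt - J)^T *m y); rewrite -JtE.
by have := J_lower y; have := dJ_tr_le y; lra.
Qed.

Let J_gram : J *m J^T \in unitmx := unitmx_gram gam_gt0 J_lower.

Lemma gram_perturbed_unitmx : Jt *m Jt^T \in unitmx.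
Proof. by apply: unitmx_gram norm2_trmx_perturbed_ge; rewrite subr_gt0. Qed.
Let Jt_gram := gram_perturbed_unitmx.

(* [Pt] kills [Jt^T w], so on the range of [J^T] it only sees [(J - Jt)^T w] *)
Lemma norm2_projP_perturbed_range (w : 'cV[R]_m) :
  norm2 (Pt *m (J^T *m w)) <= e * norm2 (J^T *m w).
Proof.
have -> : Pt *m (J^T *m w) = - (Pt *m ((Jt - J)^T *m w)).
  rewrite [(Jt - J)^T]linearB /= (mulmxBl Jt^T J^T) (mulmxBr Pt).
  by rewrite projP_tr_mul ?Jt_gram // sub0r opprK.
rewrite norm2N; apply: le_trans (norm2_projP_le Jt_gram _) _.
apply: le_trans (dJ_tr_le w) _.
have -> : eJ * norm2 w = e * (gam * norm2 w) by rewrite mulrCA mulrA mulVKf ?gt_eqF.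
exact: ler_wpM2l.
Qed.

Lemma norm2_projP_perturbed_subr (z : 'cV[R]_n) :
  norm2 (Pt *m (z - P *m z)) <= e * norm2 (z - P *m z).
Proof. by rewrite subr_projP ?J_gram //; apply: norm2_projP_perturbed_range. Qed.

Lemma mixed_gram_unitmx : Jt *m J^T \in unitmx.
Proof.
apply: ker0_unitmx => w Jt_Jw0; apply: (lower_bound_trmx_mul_eq0 gam_gt0 J_lower).
have Pt_Jw : Pt *m (J^T *m w) = J^T *m w by apply: projP_id; rewrite mulmxA.
have := norm2_projP_perturbed_range w; rewrite Pt_Jw => Jw_le.
apply: norm2_eq0; apply/eqP; rewrite eq_le norm2_ge0 andbT.
by have := e_lt1; have := norm2_ge0 (J^T *m w); nra.
Qed.

Lemma projP_perturbed_lift (x : 'cV[R]_n) : J *m x = 0 ->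
  exists2 y, Jt *m y = 0 & P *m y = x.
Proof.
move=> Jx0; exists (x - J^T *m (invmx (Jt *m J^T) *m (Jt *m x))).
  by rewrite mulmxBr !mulmxA mulmxV ?mixed_gram_unitmx // mul1mx subrr.
by rewrite mulmxBr projP_tr_mul ?J_gram // subr0 projP_id.
Qed.

(* Writing [x - Pt x = Jt^T (Jt Jt^T)^-1 (Jt - J) x] only gives the constant [eJ / (gam - eJ)];
   the sharp [eJ / gam] comes from the lift [y] of [x] to [ker Jt], whose distance to
   [ker J] is bounded by [norm2_projP_perturbed_subr]. *)
Lemma norm2_subr_projP_perturbed_ker (x : 'cV[R]_n) : J *m x = 0 ->
  norm2 (x - Pt *m x) <= e * norm2 x.
Proof.
move=> Jx0; have [y Jty0 Py] := projP_perturbed_lift Jx0.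
have Pty : Pt *m y = y by apply: projP_id.
apply: (dual_projection_ineq (Y := norm2 y) (p := norm2 (Pt *m x))
  (r := norm2 (y - P *m y))); rewrite ?e_ge0 ?e_lt1 ?norm2_ge0 //.
- by rewrite (norm2_projP_pythagoras J_gram y) Py addrC.
- apply: le_of_sqr_le_mul; [exact: norm2_ge0 | exact: mulr_ge0 e_ge0 (norm2_ge0 _) |].
  have -> : norm2 (y - P *m y) ^+ 2 = dotv (y - P *m y) y.
    by rewrite norm2_sqr [in LHS]dotvBr (dotvC _ (P *m y)) dotv_projP_subr // subr0.
  rewrite -[y in dotv _ y]Pty -dotv_projP; apply: le_trans (cauchy_schwarz _ _) _.
  rewrite mulrA [_ * e]mulrC; apply: ler_wpM2r; first exact: norm2_ge0.
  exact: norm2_projP_perturbed_subr.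
- by rewrite (norm2_projP_pythagoras Jt_gram x).
- have -> : norm2 x ^+ 2 = dotv x y.
    by rewrite norm2_sqr -Py !dotv_projP mulmxA projP_idem.
  by rewrite -[y in dotv _ y]Pty -dotv_projP cauchy_schwarz.
Qed.

Lemma norm2_projP_sub_le (g : 'cV[R]_n) : norm2 (P *m g - Pt *m g) <= e * norm2 g.
Proof.
set a := P *m g; set b := g - a.
have Ja0 : J *m a = 0 by rewrite mulmxA mulmx_projP // mul0mx.
have -> : a - Pt *m g = (a - Pt *m a) - Pt *m b.
  by rewrite /b mulmxBr opprB addrA subrK.
apply: le_of_sqr_le; first by rewrite mulr_ge0 ?norm2_ge0.
rewrite pythagoras; last by rewrite dotvC dotv_projP_subr.
rewrite exprMn (norm2_projP_pythagoras J_gram g) mulrDr -!exprMn.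
apply: lerD; apply: lerXn2r; rewrite ?nnegrE ?(mulr_ge0 e_ge0) ?norm2_ge0 //.
  exact: norm2_subr_projP_perturbed_ker Ja0.
exact: norm2_projP_perturbed_subr.
Qed.

End ProjectionPerturbation.

Section ModelReduction.
Variables (R : realType) (m n : nat).
Variables (g gt : 'cV[R]_n) (c ct : 'cV[R]_m) (J Jt : 'M[R]_(m, n)) (d : 'cV[R]_n).
Variables (eps_c eps_g eps_J gam beta pi tau : R).
Hypothesis ct_err : norm1 (ct - c) <= eps_c.
Hypothesis gt_err : norm2 (gt - g) <= eps_g.
Hypothesis Jt_err : forall z, norm1 ((Jt - J) *m z) <= eps_J * norm2 z.
Hypothesis eps_J_ge0 : 0 <= eps_J.
Hypothesis eps_J_lt_gam : eps_J < gam.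
Hypothesis J_lower : forall y, gam * norm2 y <= norm2 (J^T *m y).
Hypothesis beta_gt0 : 0 < beta.
Hypothesis tau_lt1 : tau < 1.
Hypothesis pi_ge0 : 0 <= pi.
Hypothesis pi_large : (1 - tau)^-1 * normInf (invmx (Jt *m Jt^T) *m Jt *m gt) <= pi.
Hypothesis d_qp : solves_qp beta gt ct Jt d.

Local Notation P := (projP J).
Local Notation Pt := (projP Jt).
Local Notation delta := (gam - eps_J)^-1.
Local Notation eta := gam^-1.
Local Notation v := (Jt^T *m (invmx (Jt *m Jt^T) *m ct)).

Let Jt_gram := gram_perturbed_unitmx J_lower Jt_err eps_J_ge0 eps_J_lt_gam.
Let delta_ge0 : 0 <= delta. Proof. by rewrite invr_ge0 subr_ge0 ltW. Qed.
Let beta_inv_ge0 : 0 <= beta^-1. Proof. by rewrite invr_ge0 ltW. Qed.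

Lemma norm1_ct_le : norm1 ct <= norm1 c + eps_c.
Proof.
apply: le_trans (_ : _ <= norm1 c + norm1 (ct - c)) _; last by rewrite lerD2l.
by have := norm1D c (ct - c); rewrite [c + _]addrC subrK.
Qed.

Lemma norm2_normal_step_le : norm2 v <= delta * norm1 ct.
Proof.
set w := invmx (Jt *m Jt^T) *m ct.
have w_le : norm2 w <= delta * norm2 v.
  rewrite ler_pdivlMl ?subr_gt0 //.
  exact: norm2_trmx_perturbed_ge J_lower Jt_err eps_J_ge0 w.
apply: le_of_sqr_le_mul; rewrite ?mulr_ge0 ?norm1_ge0 ?norm2_ge0 ?delta_ge0 //.
rewrite norm2_sqr -dotv_trmx mulmxA {2}/w mulmxA mulmxV // mul1mx.
apply: le_trans (cauchy_schwarz _ _) _.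
by rewrite mulrA [norm2 v * _]mulrC; apply: ler_pM; rewrite ?norm2_ge0 ?norm2_le_norm1.
Qed.

(* [gt^T v] pairs the least-squares multiplier estimate [(Jt Jt^T)^-1 Jt gt] with [ct]. *)
Lemma dotv_normal_step_ge : - dotv gt v <= (1 - tau) * pi * norm1 ct.
Proof.
rewrite dotv_trmx trmxK dotv_trmx trmx_inv trmx_mul trmxK mulmxA.
apply: le_trans (ler_norm _) _; rewrite normrN.
apply: le_trans (abs_dotv_le_normInf_norm1 _ _) _; apply: ler_wpM2r; first exact: norm1_ge0.
by move: pi_large; rewrite mulrC ler_pdivrMr ?subr_gt0 // mulrC.
Qed.

Lemma dotv_projP_perturbed_ge :
  dotv g (P *m g) - (norm2 g ^+ 2 * eta * eps_J + eps_g * norm2 g) <= dotv g (Pt *m gt).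
Proof.
have dP := norm2_projP_sub_le J_lower Jt_err eps_J_ge0 eps_J_lt_gam g.
have PtgE : dotv g (Pt *m gt)
    = dotv g (P *m g) - dotv g (P *m g - Pt *m g) + dotv (Pt *m g) (gt - g).
  by rewrite dotv_projP // mulmxBr !dotvBr; ring.
rewrite PtgE opprD addrA; apply: lerD.
  rewrite lerD2l lerN2 expr2 -!mulrA; apply: le_trans (cauchy_schwarz _ _) _.
  by apply: ler_wpM2l; rewrite ?norm2_ge0 // mulrC.
rewrite lerNl; apply: le_trans (ler_norm _) _; rewrite normrN.
apply: le_trans (cauchy_schwarz_abs _ _) _.
by rewrite mulrC; apply: ler_pM; rewrite ?norm2_ge0 ?norm2_projP_le.
Qed.

Lemma norm2_projP_perturbed_le :
  norm2 (Pt *m gt) <= norm2 (P *m g) + norm2 g * eta * eps_J + eps_g.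
Proof.
have -> : Pt *m gt = P *m g - (P *m g - Pt *m g) + Pt *m (gt - g).
  by rewrite mulmxBr subKr addrC subrK.
apply: le_trans (norm2D _ _) _; apply: lerD.
  apply: le_trans (norm2B _ _) _; rewrite lerD2l -mulrA mulrC.
  exact: norm2_projP_sub_le J_lower Jt_err eps_J_ge0 eps_J_lt_gam g.
exact: le_trans (norm2_projP_le Jt_gram _) gt_err.
Qed.

Lemma norm2_step_le : norm2 d <=
  delta * (norm1 c + eps_c) + beta^-1 * (norm2 (P *m g) + norm2 g * eta * eps_J + eps_g).
Proof.
rewrite (solves_qpE beta_gt0 Jt_gram d_qp).
apply: le_trans (norm2B _ _) _; rewrite norm2N norm2Z ger0_norm //.
rewrite [_ + norm2 v]addrC lerD //.
  by apply: le_trans norm2_normal_step_le _; rewrite ler_wpM2l ?norm1_ct_le.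
by rewrite ler_wpM2l ?norm2_projP_perturbed_le.
Qed.

Lemma norm1_linearized_constraint_le : norm1 (c + J *m d) <= eps_c + eps_J * norm2 d.
Proof.
have [d_feas _] := d_qp.
have -> : c + J *m d = - (ct - c) - (Jt - J) *m d.
  by rewrite mulmxBl !opprB addrACA -opprD d_feas subr0.
by apply: le_trans (norm1D _ _) _; rewrite !norm1N lerD.
Qed.

Lemma ell_le :
  ell g c J pi d <= - (beta^-1 * dotv g (P *m g) + tau * pi * norm1 c)
                    + Eterm eps_c eps_g eps_J delta eta tau g c J beta pi.
Proof.
have tangential : beta^-1 * (dotv g (P *m g) - (norm2 g ^+ 2 * eta * eps_J + eps_g * norm2 g))
    <= beta^-1 * dotv g (Pt *m gt).
  by rewrite ler_wpM2l ?dotv_projP_perturbed_ge.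
have noise : dotv (gt - g) v <= eps_g * (delta * (norm1 c + eps_c)).
  apply: le_trans (cauchy_schwarz _ _) _; apply: ler_pM; rewrite ?norm2_ge0 //.
  by apply: le_trans norm2_normal_step_le _; rewrite ler_wpM2l ?norm1_ct_le.
have multiplier : (1 - tau) * pi * norm1 ct <= (1 - tau) * pi * (norm1 c + eps_c).
  by rewrite ler_wpM2l ?norm1_ct_le // mulr_ge0 // subr_ge0 ltW.
have infeasibility : pi * norm1 (c + J *m d) <= pi * (eps_c + eps_J *
    (delta * (norm1 c + eps_c) + beta^-1 * (norm2 (P *m g) + norm2 g * eta * eps_J + eps_g))).
  rewrite ler_wpM2l //; apply: le_trans norm1_linearized_constraint_le _.
  by rewrite lerD // ler_wpM2l ?norm2_step_le.
have normal := dotv_normal_step_ge.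
have gradient_noise : dotv g v = dotv gt v - dotv (gt - g) v by rewrite dotvBl; ring.
rewrite /ell [in dotv g d](solves_qpE beta_gt0 Jt_gram d_qp) dotvBr dotvNr dotvZr.
rewrite gradient_noise /Eterm; lra.
Qed.

End ModelReduction.

Theorem corollary3p1 (R : realType) (m n : nat) (hmn : (m < n)%N)
  (f : 'cV[R]_n -> R) (c : 'cV[R]_n -> 'cV[R]_m)
  (g : 'cV[R]_n -> 'cV[R]_n) (J : 'cV[R]_n -> 'M[R]_(m, n))
  (hf : forall x, differentiable f x /\ forall v, 'd f x v = dotv (g x) v)
  (hc : forall x, differentiable c x /\ forall v, 'd c x v = J x *m v)
  (hg_cont : continuous g) (hJ_cont : continuous J)
  (ft : 'cV[R]_n -> R) (ct : 'cV[R]_n -> 'cV[R]_m)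
  (gt : 'cV[R]_n -> 'cV[R]_n) (Jt : 'cV[R]_n -> 'M[R]_(m, n))
  (eps_f eps_c eps_g eps_J : R)
  (hft : forall x, `|ft x - f x| <= eps_f)
  (hct : forall x, norm1 (ct x - c x) <= eps_c)
  (hgt : forall x, norm2 (gt x - g x) <= eps_g)
  (hJt : forall x, opnorm12 (Jt x - J x) <= eps_J)
  (x : nat -> 'cV[R]_n) (gamma : R) (hgamma : eps_J < gamma)
  (hsig : forall k, gamma <= sigma_min (J (x k)))
  (beta pi : nat -> R) (d : nat -> 'cV[R]_n) (tau : R)
  (hbeta : forall k, 0 < beta k)
  (hd : forall k, solves_qp (beta k) (gt (x k)) (ct (x k)) (Jt (x k)) (d k))
  (htau : 0 < tau < 1)
  (hpi0 : forall k, 0 < pi k)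
  (hpi : forall k, (1 - tau)^-1 *
          normInf (invmx (Jt (x k) *m (Jt (x k))^T) *m Jt (x k) *m gt (x k)) <= pi k)
  (theta1 : R) (htheta : 0 <= theta1 < 1) (k : nat) :
  let delta := (gamma - eps_J)^-1 in
  let eta := gamma^-1 in
  let gk := g (x k) in let ck := c (x k) in let Jk := J (x k) in
  let Psi := (beta k)^-1 * dotv gk (projP Jk *m gk) + tau * pi k * norm1 ck in
  (1 - theta1) * Psi >= Eterm eps_c eps_g eps_J delta eta tau gk ck Jk (beta k) (pi k) ->
  ell gk ck Jk (pi k) (d k) <= - theta1 * Psi.
Proof.
move=> delta eta gk ck Jk Psi E_le.
have eps_J_ge0 : 0 <= eps_J.
  apply: le_trans _ (hJt (x k)); exact: opnorm12_ge0 (leq_ltn_trans (leq0n m) hmn).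
have Jt_err z : norm1 ((Jt (x k) - Jk) *m z) <= eps_J * norm2 z.
  apply: le_trans (norm1_mulmx_le_opnorm12 _ _) _.
  by apply: ler_wpM2r; [exact: norm2_ge0 | exact: hJt].
have J_lower y : gamma * norm2 y <= norm2 (Jk^T *m y).
  apply: le_trans _ (sigma_min_mul_norm2_le _ _).
  by apply: ler_wpM2r; [exact: norm2_ge0 | exact: hsig].
have tau_lt1 : tau < 1 by case/andP: htau.
have := ell_le (hct (x k)) (hgt (x k)) Jt_err eps_J_ge0 hgamma J_lower (hbeta k)
  tau_lt1 (ltW (hpi0 k)) (hpi k) (hd k).
by rewrite -/delta -/eta -/Psi; lra.
Qed.
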